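(* Let $G=(V,E)$ be a graph, $d\geq 1$, and let $u,v,w\in V$ be distinct vertices. Suppose that $u\in N_G(v)\subseteq N_G(w)\cup\{w\}$ and that $uw$ is an $\mathcal{R}_d$-bridge in $G$. Then $uv$ is an $\mathcal{R}_d$-bridge in $G-w$.
   Context: For a graph $G$, the $d$-dimensional generic rigidity matroid $\mathcal{R}_d(G)$ is the matroid on $E(G)$ given by linear independence of the rows of the rigidity matrix of a generic $d$-dimensional framework $(G,p)$ (positions with coordinates algebraically independent over $\mathbb{Q}$); it depends only on $G$. Its rank function is $r_d$, and for a graph $H$ we write $r_d(H)$ for the rank of $E(H)$. An edge $e$ of $G$ is an $\mathcal{R}_d$-bridge of $G$ if $r_d(G-e)=r_d(G)-1$. $N_G(x)$ denotes the neighbourhood of $x$. *)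

From HB Require Import structures.
From mathcomp Require Import all_boot all_order all_algebra.
From mathcomp Require Import reals.
From mathcomp Require Import mpoly.
Set Implicit Arguments. Unset Strict Implicit. Unset Printing Implicit Defensive.
Import GRing.Theory Num.Theory.
Local Open Scope ring_scope.

Definition simple_graph (n : nat) (g : rel 'I_n) : Prop :=
  ssrbool.symmetric g /\ irreflexive g.

Definition del_edge (n : nat) (g : rel 'I_n) (x y : 'I_n) : rel 'I_n :=
  fun a b => g a b && ~~ (((a == x) && (b == y)) || ((a == y) && (b == x))).

(* G - w : delete vertex w (w kept as an isolated vertex; isolated vertices
   contribute only zero columns to the rigidity matrix). *)
Definition del_vertex (n : nat) (g : rel 'I_n) (w : 'I_n) : rel 'I_n :=
  fun a b => [&& g a b, a != w & b != w].

(* A d-dimensional placement of 'I_n: row x of P is p(x) in R^d. *)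

(* Generic placement: the n*d coordinates are algebraically independent
   over Q, i.e. no nonzero rational polynomial in n*d variables vanishes
   at them. *)
Definition generic (R : realType) (n d : nat) (P : 'M[R]_(n, d)) : Prop :=
  forall q : {mpoly rat[n * d]}, q != 0 ->
    mmap (@ratr R) (fun k => mxvec P 0 k) q != 0.

Definition rig_row (R : realType) (n d : nat) (P : 'M[R]_(n, d)) (x y : 'I_n)
  : 'rV[R]_(n * d) :=
  mxvec (\matrix_(i < n, k < d)
           (if i == x then P x k - P y k
            else if i == y then P y k - P x k else 0)).

Definition rig_rank (R : realType) (n d : nat) (g : rel 'I_n) (P : 'M[R]_(n, d))
  : nat :=
  \rank (\sum_(xy : 'I_n * 'I_n | g xy.1 xy.2) <<rig_row P xy.1 xy.2>>)%MS.

(* xy is an R_d-bridge of G (computed at the generic placement P):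
   xy is an edge and r_d(G - xy) = r_d(G) - 1. *)
Definition rd_bridge (R : realType) (n d : nat) (g : rel 'I_n) (P : 'M[R]_(n, d))
  (x y : 'I_n) : Prop :=
  g x y /\ (rig_rank (del_edge g x y) P + 1 = rig_rank g P)%N.

From HB Require Import structures.
From mathcomp Require Import all_boot all_order all_algebra.
From mathcomp Require Import reals mpoly fingroup perm.
Set Implicit Arguments. Unset Strict Implicit. Unset Printing Implicit Defensive.
Import GRing.Theory Num.Theory.
Local Open Scope ring_scope.

(* Generic ranks are maximal: a nonsingular minor of the rigidity matrix at any
   placement is a nonzero rational polynomial in the coordinates, hence does not
   vanish at a generic placement.  Consequently relabelling the vertices of a
   graph does not change its generic rank, so exchanging v and w turns the
   bridge uw of G into the bridge uv of the graph G' obtained from G by swapping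
   v and w.  Since N(v) is contained in N(w) + w, the graph G - w is a subgraph
   of G' containing uv, and an edge whose rigidity row lies outside the span of
   the other rows keeps this property when edges are deleted. *)

Section MatrixRank.
Variable F : fieldType.

Lemma exists_nonsingular_minor m N (B : 'M[F]_(m, N)) :
  exists f : 'I_(\rank B) -> 'I_m, exists h : 'I_(\rank B) -> 'I_N,
    \det (mxsub f h B) != 0.
Proof.
pose B1 := rowsub (maxrankfun B) B.
have B1T_full : row_full B1^T by rewrite /row_full mxrank_tr; exact: maxrowsub_free.
exists (maxrankfun B), (fullrankfun B1T_full).
have -> : mxsub (maxrankfun B) (fullrankfun B1T_full) B =
          (rowsub (fullrankfun B1T_full) B1^T)^T by apply/matrixP => i j; rewrite !mxE.
by rewrite det_tr -unitfE -unitmxE fullrowsub_unit.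
Qed.

Lemma mxrank_mxsub m N m' N' (f : 'I_m' -> 'I_m) (h : 'I_N' -> 'I_N)
    (A : 'M[F]_(m, N)) :
  (\rank (mxsub f h A) <= \rank A)%N.
Proof.
have -> : mxsub f h A = rowsub f A *m colsub h 1%:M by rewrite -mxsub_mul mulmx1.
exact: leq_trans (mxrankM_maxl _ _) (mxrankS (rowsub_sub _ _)).
Qed.

Lemma mxrank_adds_rV m N (D : 'M[F]_(m, N)) (r : 'rV[F]_N) :
  \rank (D + <<r>>)%MS = (\rank D + ~~ (r <= D)%MS)%N.
Proof.
have [rD|rD] /= := boolP (r <= D)%MS.
  by rewrite addn0; apply/eqmx_rank; rewrite addsmx_sub submx_refl genmxE rD addsmxSl.
have r0 : r != 0 by apply: contraNneq rD => ->; rewrite sub0mx.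
apply/eqP; rewrite eqn_leq addn1; apply/andP; split.
  by case: (mxrank_adds_leqif D <<r>>%MS); rewrite genmxE rank_rV r0 addn1.
have : (D < D + <<r>>)%MS by rewrite ltmxE addsmxSl addsmx_sub submx_refl genmxE rD.
by rewrite ltmxErank => /andP[].
Qed.

End MatrixRank.

Lemma generic_rank_max (R : numFieldType) N m m' (M : 'M[{mpoly rat[N]}]_(m, m'))
    (x y : 'I_N -> R) :
  (forall q : {mpoly rat[N]}, q != 0 -> mmap (@ratr R) x q != 0) ->
  (\rank (map_mx (mmap (@ratr R) y) M) <= \rank (map_mx (mmap (@ratr R) x) M))%N.
Proof.
move=> x_generic.
have [f [h minor_y]] := exists_nonsingular_minor (map_mx (mmap (@ratr R) y) M).
have minor_x : \det (mxsub f h (map_mx (mmap (@ratr R) x) M)) != 0.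
  rewrite -map_mxsub det_map_mx; apply: x_generic.
  by apply: contraNneq minor_y; rewrite -map_mxsub det_map_mx => ->; rewrite rmorph0.
have/mxrank_unit <- : mxsub f h (map_mx (mmap (@ratr R) x) M) \in unitmx.
  by rewrite unitmxE unitfE.
exact: mxrank_mxsub.
Qed.

Section Rigidity.
Variables n d : nat.

Definition edge_row (T : pzRingType) (Q : 'M[T]_(n, d)) (x y : 'I_n) : 'rV[T]_(n * d) :=
  mxvec (\matrix_(i < n, k < d)
           (if i == x then Q x k - Q y k else if i == y then Q y k - Q x k else 0)).

Definition rigidity_matrix (T : pzRingType) (Y : rel 'I_n) (Q : 'M[T]_(n, d)) :
    'M[T]_(#|{: 'I_n * 'I_n}|, n * d) :=
  \matrix_e (let: (x, y) := enum_val e in if Y x y then edge_row Q x y else 0).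

Lemma map_edge_row (T T' : pzRingType) (f : {rmorphism T -> T'}) Q x y :
  map_mx f (edge_row Q x y) = edge_row (map_mx f Q) x y.
Proof.
rewrite /edge_row map_mxvec; congr mxvec; apply/matrixP => i k; rewrite !mxE.
by case: ifP => _; [rewrite rmorphB | case: ifP => _; rewrite ?rmorphB ?rmorph0].
Qed.

Lemma map_rigidity_matrix (T T' : pzRingType) (f : {rmorphism T -> T'}) Y Q :
  map_mx f (rigidity_matrix Y Q) = rigidity_matrix Y (map_mx f Q).
Proof.
apply/row_matrixP => e; rewrite -map_row !rowK.
by case: (enum_val e) => x y; case: ifP => _; rewrite ?map_edge_row ?map_mx0.
Qed.

Definition rig_space (R : realType) (Y : rel 'I_n) (P : 'M[R]_(n, d)) :=
  (\sum_(xy : 'I_n * 'I_n | Y xy.1 xy.2) <<rig_row P xy.1 xy.2>>)%MS.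

Lemma rig_rank_matrix (R : realType) Y (P : 'M[R]_(n, d)) :
  rig_rank Y P = \rank (rigidity_matrix Y P).
Proof.
apply/eqmx_rank/andP; split.
  apply/sumsmx_subP => -[x y] /= Yxy; rewrite genmxE.
  have -> : rig_row P x y = row (enum_rank (x, y)) (rigidity_matrix Y P).
    by rewrite rowK enum_rankK Yxy.
  exact: row_sub.
apply/row_subP => e; rewrite rowK; case: (enum_val e) => x y.
case: ifP => Yxy; last exact: sub0mx.
by apply: (sumsmx_sup (x, y)) => //; rewrite genmxE.
Qed.

Definition coord_poly_matrix : 'M[{mpoly rat[n * d]}]_(n, d) :=
  \matrix_(i, k) 'X_(mxvec_index i k).

Lemma eval_coord_poly_matrix (R : realType) (P : 'M[R]_(n, d)) :
  map_mx (mmap (@ratr R) (fun j => mxvec P 0 j)) coord_poly_matrix = P.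
Proof. by apply/matrixP => i k; rewrite !mxE mmapX mmap1U mxvecE. Qed.

Lemma rig_rank_generic_max (R : realType) Y (P Q : 'M[R]_(n, d)) :
  generic P -> (rig_rank Y Q <= rig_rank Y P)%N.
Proof.
move=> P_generic.
have := generic_rank_max (rigidity_matrix Y coord_poly_matrix)
                          (fun j => mxvec Q 0 j) P_generic.
by rewrite !map_rigidity_matrix !eval_coord_poly_matrix -!rig_rank_matrix.
Qed.

Lemma rig_rankE (R : realType) Y (P : 'M[R]_(n, d)) :
  rig_rank Y P = \rank (rig_space Y P).
Proof. by []. Qed.

Lemma rig_spaceS (R : realType) (Y Y' : rel 'I_n) (P : 'M[R]_(n, d)) :
  (forall a b, Y' a b -> Y a b) -> (rig_space Y' P <= rig_space Y P)%MS.
Proof.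
move=> subY; apply/sumsmx_subP => -[a b] /= /subY Yab.
by apply: (sumsmx_sup (a, b)).
Qed.

Lemma eq_rig_rank (R : realType) (Y Y' : rel 'I_n) (P : 'M[R]_(n, d)) :
  Y =2 Y' -> rig_rank Y P = rig_rank Y' P.
Proof.
by move=> eqY; apply/eqmx_rank/andP; split; apply: rig_spaceS => a b; rewrite eqY.
Qed.

Definition relabel (s : {perm 'I_n}) (Y : rel 'I_n) : rel 'I_n :=
  fun a b => Y (s a) (s b).

Lemma rig_row_relabel (R : realType) (s : {perm 'I_n}) (P : 'M[R]_(n, d)) a b :
  rig_row P a b =
  rig_row (row_perm (s^-1)%g P) (s a) (s b) *m lin_mx (mulmx (perm_mx s)).
Proof.
rewrite mul_vec_lin /= -row_permE; congr mxvec; apply/matrixP => i k.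
by rewrite !mxE !(inj_eq perm_inj) !permK.
Qed.

Lemma rig_rank_relabel_le (R : realType) s Y (P : 'M[R]_(n, d)) :
  (rig_rank (relabel s Y) P <= rig_rank Y (row_perm (s^-1)%g P))%N.
Proof.
apply: leq_trans (mxrankM_maxl _ (lin_mx (mulmx (perm_mx s)))); apply: mxrankS.
apply/sumsmx_subP => -[a b] Yab; rewrite genmxE (rig_row_relabel s) submxMr //.
by apply: (sumsmx_sup (s a, s b)) => //; rewrite genmxE.
Qed.

Lemma rig_rank_relabel (R : realType) s Y (P : 'M[R]_(n, d)) :
  generic P -> rig_rank (relabel s Y) P = rig_rank Y P.
Proof.
move=> P_generic; apply/eqP; rewrite eqn_leq.
rewrite (leq_trans (rig_rank_relabel_le s Y P)) ?rig_rank_generic_max //=.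
rewrite (@eq_rig_rank _ Y (relabel (s^-1)%g (relabel s Y))) => [|a b]; last first.
  by rewrite /relabel !permKV.
exact: leq_trans (rig_rank_relabel_le _ _ _) (rig_rank_generic_max _ _ P_generic).
Qed.

Lemma rig_row_sym (R : realType) (P : 'M[R]_(n, d)) x y :
  rig_row P y x = rig_row P x y.
Proof.
congr mxvec; apply/matrixP => i k; rewrite !mxE.
have [->|yx] := eqVneq y x => //.
by have [->|iy] := eqVneq i y; [rewrite (negbTE yx) | case: eqVneq].
Qed.

Lemma rig_space_del_edge (R : realType) (Y : rel 'I_n) (P : 'M[R]_(n, d)) x y :
  Y x y ->
  (rig_space Y P :=: rig_space (del_edge Y x y) P + <<rig_row P x y>>)%MS.
Proof.
move=> Yxy; apply/eqmxP/andP; split.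
  apply/sumsmx_subP => -[a b] /= Yab.
  have [kept|] := boolP (del_edge Y x y a b).
    by apply/(submx_trans _ (addsmxSl _ _))/(sumsmx_sup (a, b)).
  rewrite /del_edge Yab negbK => /orP[] /andP[/eqP-> /eqP->];
  by rewrite ?[rig_row P y x]rig_row_sym addsmxSr.
rewrite addsmx_sub; apply/andP; split; first by apply: rig_spaceS => a b /andP[].
by apply: (sumsmx_sup (x, y)) => //; rewrite genmxE.
Qed.

Lemma rd_bridgeP (R : realType) (Y : rel 'I_n) (P : 'M[R]_(n, d)) x y : Y x y ->
  rd_bridge Y P x y <-> ~~ (rig_row P x y <= rig_space (del_edge Y x y) P)%MS.
Proof.
move=> Yxy; rewrite /rd_bridge [rig_rank Y P]rig_rankE (rig_space_del_edge P Yxy).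
rewrite mxrank_adds_rV -rig_rankE.
by case: (~~ _); split=> [[_ /addnI/eqP]|_] //; split.
Qed.

Lemma rd_bridgeS (R : realType) (Y Y' : rel 'I_n) (P : 'M[R]_(n, d)) x y :
  (forall a b, Y' a b -> Y a b) -> Y' x y ->
  rd_bridge Y P x y -> rd_bridge Y' P x y.
Proof.
move=> subY Y'xy /(rd_bridgeP _ (subY _ _ Y'xy)) bridgeY.
apply/(rd_bridgeP _ Y'xy); apply: contra bridgeY => /submx_trans; apply.
by apply: rig_spaceS => a b /andP[/subY Yab kept]; rewrite /del_edge Yab kept.
Qed.

Lemma rd_bridge_relabel (R : realType) s (Y : rel 'I_n) (P : 'M[R]_(n, d)) x y :
  generic P -> rd_bridge (relabel s Y) P x y <-> rd_bridge Y P (s x) (s y).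
Proof.
move=> P_generic; rewrite /rd_bridge -(rig_rank_relabel s Y P_generic).
rewrite -(rig_rank_relabel s (del_edge Y (s x) (s y)) P_generic).
rewrite (@eq_rig_rank _ (del_edge (relabel s Y) x y)
                        (relabel s (del_edge Y (s x) (s y)))) // => a b.
by rewrite /del_edge /relabel !(inj_eq perm_inj).
Qed.

Lemma del_vertex_sub_relabel_tperm (g : rel 'I_n) (v w : 'I_n) :
  simple_graph g -> (forall x, g v x -> g w x || (x == w)) ->
  forall a b, del_vertex g w a b -> relabel (tperm v w) g a b.
Proof.
move=> [g_sym g_irr] Nv_sub a b /and3P[gab aw bw]; rewrite /relabel.
have Nv x : x != w -> g v x -> g w x by move=> xw /Nv_sub; rewrite (negbTE xw) orbF.
have tperm_fix c : c != v -> c != w -> tperm v w c = c.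
  by move=> cv cw; rewrite tpermD // eq_sym.
have [av|av] := eqVneq a v.
  have bv : b != v by apply: contraTneq gab => ->; rewrite av g_irr.
  by rewrite av tpermL tperm_fix // Nv // -av.
have [bv|bv] := eqVneq b v; last by rewrite !tperm_fix.
by rewrite bv tpermL tperm_fix // g_sym Nv // g_sym -bv.
Qed.

End Rigidity.

Theorem proposition2p7 (n d : nat) (g : rel 'I_n) (u v w : 'I_n) :
  simple_graph g -> (1 <= d)%N ->
  u != v -> u != w -> v != w ->
  g v u ->
  (forall x : 'I_n, g v x -> g w x || (x == w)) ->
  forall (R : realType) (P : 'M[R]_(n, d)), generic P ->
  rd_bridge g P u w -> rd_bridge (del_vertex g w) P u v.
Proof.
move=> g_simple _ uv uw vw gvu Nv_sub R P P_generic bridge_uw.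
have bridge_uv : rd_bridge (relabel (tperm v w) g) P u v.
  by apply/(rd_bridge_relabel _ _ _ _ P_generic); rewrite tpermL tpermD // eq_sym.
apply: rd_bridgeS bridge_uv; first exact: del_vertex_sub_relabel_tperm.
by rewrite /del_vertex g_simple.1 gvu uw vw.
Qed.
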